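(* Let $Q$ be a finite boolean combination (finite unions, intersections and complements) of principal quantifiers of the form $Q_A$ with $A\subseteq\mathbb{N}^d$ for a fixed $d$. Then for every $a\in(\mathbb{N}^d)^{<\omega}$ the orbit $\{g(a):g\in\mathrm{Aut}(Q)\}$ is definable in $\mathscr{L}_{\omega_1\omega}(Q)$.
   Context: For $A\subseteq\mathbb{N}^d$, the principal quantifier $Q_A=\{X\subseteq\mathbb{N}^d:A\subseteq X\}$ is a quantifier of type $\langle d\rangle$ on $\mathbb{N}$ (a family of subsets of $\mathbb{N}^d$). A permutation $g$ of $\mathbb{N}$ acts coordinatewise on tuples and on subsets by $g(X)=\{g(x):x\in X\}$; $g$ fixes $Q$ if $X\in Q\iff g(X)\in Q$ for all $X\subseteq\mathbb{N}^d$, and $\mathrm{Aut}(Q)$ is the group of such permutations. $\mathscr{L}_{\omega_1\omega}(Q)$ extends $\mathscr{L}_{\omega_1\omega}$ (countable conjunctions/disjunctions, finite quantifier strings) by formulas $Qx\,\varphi(x,y)$ ($x$ a $d$-tuple of variables) with $\mathbb{N}\models Qx\,\varphi(x,b)$ iff $\{a\in\mathbb{N}^d:\mathbb{N}\models\varphi(a,b)\}\in Q$. A set $B$ of tuples is definable in $\mathscr{L}_{\omega_1\omega}(Q)$ if there is a formula without parameters whose only non-logical symbol is $Q$ that defines $B$ in $\mathbb{N}$. *)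

From mathcomp Require Import all_boot.
Set Implicit Arguments. Unset Strict Implicit. Unset Printing Implicit Defensive.

Definition tup (d : nat) := 'I_d -> nat.

(* A quantifier of type <d> on N: a family of subsets of N^d *)
Definition quantifier (d : nat) := (tup d -> Prop) -> Prop.

Definition principal (d : nat) (A : tup d -> Prop) : quantifier d :=
  fun X => forall x, A x -> X x.

Inductive bcomb (d : nat) : Type :=
| BPrin of (tup d -> Prop)
| BCompl of bcomb d
| BInter of bcomb d & bcomb d
| BUnion of bcomb d & bcomb d.

Fixpoint bsem (d : nat) (C : bcomb d) : quantifier d :=
  match C with
  | BPrin A => principal A
  | BCompl C1 => fun X => ~ bsem C1 X
  | BInter C1 C2 => fun X => bsem C1 X /\ bsem C2 X
  | BUnion C1 C2 => fun X => bsem C1 X \/ bsem C2 X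
  end.

Definition gimg (d : nat) (g : nat -> nat) (X : tup d -> Prop) : tup d -> Prop :=
  fun y => exists2 x, X x & forall i, y i = g (x i).

Definition in_Aut (d : nat) (Q : quantifier d) (g : nat -> nat) : Prop :=
  bijective g /\ forall X : tup d -> Prop, Q X <-> Q (gimg g X).

Definition Aut_orbit (d n : nat) (Q : quantifier d) (a : 'I_n -> tup d)
  : ('I_n -> tup d) -> Prop :=
  fun b => exists g, in_Aut Q g /\ forall i j, b i j = g (a i j).

(* Formulas of L_{omega_1 omega}(Q) whose only non-logical symbol is Q;
   variables are natural numbers; countable conjunctions/disjunctions are
   indexed by nat (finite ones by repetition). *)
Inductive formula (d : nat) : Type :=
| FEq of nat & nat
| FNot of formula d
| FAnd of (nat -> formula d)
| FOr of (nat -> formula d)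
| FEx of nat & formula d
| FQ of ('I_d -> nat) & formula d.

Definition upd (d : nat) (env : nat -> nat) (vs : 'I_d -> nat) (a : tup d) : nat -> nat :=
  fun v => match [pick i | vs i == v] with Some i => a i | None => env v end.

Definition upd1 (env : nat -> nat) (x v : nat) : nat -> nat :=
  fun w => if w == x then v else env w.

(* Satisfaction in N.  For Q x phi, the set is {a in N^d : N |= phi(a)},
   where a tuple of variables x with repetitions only admits tuples a
   agreeing on repeated positions. *)
Fixpoint sat (d : nat) (Q : quantifier d) (env : nat -> nat) (phi : formula d) : Prop :=
  match phi with
  | FEq x y => env x = env y
  | FNot p => ~ sat Q env p
  | FAnd f => forall k, sat Q env (f k)
  | FOr f => exists k, sat Q env (f k)
  | FEx x p => exists v, sat Q (upd1 env x v) p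
  | FQ vs p => Q (fun a => (forall i j, vs i = vs j -> a i = a j) /\ sat Q (upd env vs a) p)
  end.

Definition definable (d n : nat) (Q : quantifier d) (B : ('I_n -> tup d) -> Prop) : Prop :=
  exists (phi : formula d) (vars : 'I_n -> 'I_d -> nat),
    injective (fun p : 'I_n * 'I_d => vars p.1 p.2) /\
    forall env : nat -> nat, sat Q env phi <-> B (fun i j => env (vars i j)).

(* A finite boolean combination Q of principal quantifiers is finitely determined: for every X
   there is a finite F outside X with Q X <-> Q (N^d \ G) for every finite G outside X
   containing F.  Hence a permutation g fixes Q as soon as Q (N^d \ G) <-> Q (N^d \ g G) for
   all finite G, and these instances are expressible by formulas with parameters.  Two
   assignments satisfying the same formulas in their first M variables thus extend, by a
   back-and-forth enumeration of N on both sides, to enumerations related by an automorphism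
   of Q.  The orbit of a is then defined by the countable conjunction, over the finitely
   described assignments outside the orbit, of a formula true at a and false there. *)

From mathcomp Require Import all_boot.
From Stdlib Require Import Classical ClassicalEpsilon FunctionalExtensionality.
From Stdlib Require List.
Set Implicit Arguments. Unset Strict Implicit. Unset Printing Implicit Defensive.

Section FiniteDetermination.
Variable d : nat.

Definition avoid (G : list (tup d)) : tup d -> Prop := fun t => ~ List.In t G.

Definition outside (X : tup d -> Prop) : list (tup d) -> Prop :=
  List.Forall (fun z => ~ X z).

Definition determined_at (Q : quantifier d) (X : tup d -> Prop) (F : list (tup d)) :=
  outside X F /\
  forall G, List.incl F G -> outside X G -> (Q X <-> Q (avoid G)).

Lemma determined_at_incl Q X F F' :
  determined_at Q X F -> List.incl F F' -> outside X F' -> determined_at Q X F'.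
Proof.
move=> [_ QF] FF' XF'; split=> // G F'G XG.
exact: QF (List.incl_tran FF' F'G) XG.
Qed.

Lemma principal_determined (A X : tup d -> Prop) :
  exists F, determined_at (principal A) X F.
Proof.
have [AX|] := classic (forall x, A x -> X x).
  exists nil; split=> [|G _ /List.Forall_forall XG]; first by constructor.
  by split=> // _ x Ax Gx; apply: XG x Gx (AX x Ax).
move=> /not_all_ex_not[w] /(imply_to_and (A w))[Aw Xw].
exists (w :: nil); split; first by constructor.
move=> G wG _; split=> [AX|AG]; first by case: Xw; apply: AX.
by case: (AG w Aw); apply: wG; left.
Qed.

Lemma determined_at_app Q1 Q2 X F1 F2 :
  determined_at Q1 X F1 -> determined_at Q2 X F2 ->
  determined_at Q1 X (F1 ++ F2) /\ determined_at Q2 X (F1 ++ F2).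
Proof.
move=> D1 D2; have XF : outside X (F1 ++ F2).
  by apply/List.Forall_app; split; [case: D1|case: D2].
split.
- exact: determined_at_incl D1 (List.incl_appl _ (List.incl_refl F1)) XF.
- exact: determined_at_incl D2 (List.incl_appr _ (List.incl_refl F2)) XF.
Qed.

Lemma bsem_determined (C : bcomb d) (X : tup d -> Prop) :
  exists F, determined_at (bsem C) X F.
Proof.
elim: C => [A|C [F [XF QF]]|C1 [F1 D1] C2 [F2 D2]|C1 [F1 D1] C2 [F2 D2]] /=.
3,4: have [[XF Q1] [_ Q2]] := determined_at_app D1 D2;
  by exists (F1 ++ F2); split=> // G FG XG; rewrite (Q1 G FG XG) (Q2 G FG XG).
- exact: principal_determined.
- by exists F; split=> // G FG XG; rewrite (QF G FG XG).
Qed.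

End FiniteDetermination.

Section BackAndForth.
Variable P : nat -> (nat -> nat) -> (nat -> nat) -> Prop.
Hypothesis P_forth : forall M e1 e2, P M e1 e2 ->
  forall x, exists y, P M.+1 (upd1 e1 M x) (upd1 e2 M y).
Hypothesis P_back : forall M e1 e2, P M e1 e2 ->
  forall y, exists x, P M.+1 (upd1 e1 M x) (upd1 e2 M y).
Hypothesis P_local : forall M e1 e2 e1' e2',
  (forall v, v < M -> e1 v = e1' v /\ e2 v = e2' v) -> P M e1 e2 -> P M e1' e2'.

Variables (M0 : nat) (e1 e2 : nat -> nat).
Hypothesis P0 : P M0 e1 e2.

Let forth_value M (f1 f2 : nat -> nat) x :=
  epsilon (inhabits 0) (fun y => P M.+1 (upd1 f1 M x) (upd1 f2 M y)).
Let back_value M (f1 f2 : nat -> nat) y :=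
  epsilon (inhabits 0) (fun x => P M.+1 (upd1 f1 M x) (upd1 f2 M y)).

(* Stage [k] assigns the variables below [M0 + k]; variable [M0 + 2 s] gets the value [s]
   on the left, variable [M0 + 2 s + 1] gets the value [s] on the right. *)
Fixpoint stage k : (nat -> nat) * (nat -> nat) :=
  if k is k'.+1 then
    let f := stage k' in let M := M0 + k' in
    if odd k' then (upd1 f.1 M (back_value M f.1 f.2 k'./2), upd1 f.2 M k'./2)
    else (upd1 f.1 M k'./2, upd1 f.2 M (forth_value M f.1 f.2 k'./2))
  else (e1, e2).

Let stage_P k : P (M0 + k) (stage k).1 (stage k).2.
Proof.
elim: k => [|k IH]; first by rewrite addn0.
rewrite addnS /=; case: (odd k) => /=.
- exact: (epsilon_spec (inhabits 0) _ (P_back IH k./2)).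
- exact: (epsilon_spec (inhabits 0) _ (P_forth IH k./2)).
Qed.

Let stage_stable k k' v : k <= k' -> v < M0 + k ->
  (stage k').1 v = (stage k).1 v /\ (stage k').2 v = (stage k).2 v.
Proof.
move=> le_kk' lt_v; elim: k' le_kk' => [|k' IH]; first by rewrite leqn0 => /eqP ->.
rewrite leq_eqVlt => /orP[/eqP -> //|]; rewrite ltnS => le_kk'.
have [<- <-] := IH le_kk'.
have /negbTE v_neq : v != M0 + k'.
  by rewrite neq_ltn (leq_trans lt_v) // leq_add2l.
by rewrite /=; case: (odd k'); rewrite /= /upd1 v_neq.
Qed.

Let lim1 v := (stage v.+1).1 v.
Let lim2 v := (stage v.+1).2 v.

Let lim_stage k v : v < M0 + k -> lim1 v = (stage k).1 v /\ lim2 v = (stage k).2 v.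
Proof.
move=> lt_v; have lt_v' : v < M0 + v.+1 by rewrite addnS ltnS leq_addl.
have [<- <-] := stage_stable (leq_maxl k v.+1) lt_v.
by have [-> ->] := stage_stable (leq_maxr k v.+1) lt_v'.
Qed.

Lemma back_and_forth : exists E1 E2 : nat -> nat,
  [/\ forall v, v < M0 -> E1 v = e1 v /\ E2 v = e2 v,
      forall k, P (M0 + k) E1 E2,
      forall x, E1 (M0 + x.*2) = x &
      forall y, E2 (M0 + (y.*2).+1) = y].
Proof.
exists lim1, lim2; split.
- by move=> v; have := @lim_stage 0 v; rewrite addn0.
- move=> k; apply: P_local (stage_P k) => v lt_v.
  by have [-> ->] := lim_stage lt_v.
- move=> x; have lt_x : M0 + x.*2 < M0 + (x.*2).+1 by rewrite addnS.
  have [-> _] := lim_stage lt_x.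
  by rewrite /= odd_double /= /upd1 eqxx doubleK.
- move=> y; have lt_y : M0 + (y.*2).+1 < M0 + (y.*2).+2 by rewrite !addnS.
  have [_ ->] := lim_stage lt_y.
  by rewrite /= odd_double /= /upd1 eqxx uphalf_double.
Qed.

End BackAndForth.

Section Definability.
Variables (d : nat) (Q : quantifier d).
Hypothesis Q_determined : forall X, exists F, determined_at Q X F.

Lemma Q_ext X Y : (forall t, X t <-> Y t) -> (Q X <-> Q Y).
Proof.
move=> XY; have [F1 [XF1 QF1]] := Q_determined X; have [F2 [YF2 QF2]] := Q_determined Y.
have outsideXY G : outside X G <-> outside Y G.
  by split; apply: List.Forall_impl => z; rewrite XY.
have XF : outside X (F1 ++ F2) by apply/List.Forall_app; split=> //; apply/outsideXY.
rewrite (QF1 _ (List.incl_appl _ (List.incl_refl F1)) XF).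
by rewrite (QF2 _ (List.incl_appr _ (List.incl_refl F2)) (proj1 (outsideXY _) XF)).
Qed.

Lemma comp_can (g h : nat -> nat) (z : tup d) : cancel h g -> g \o (h \o z) = z.
Proof. by move=> hK; apply: functional_extensionality => i /=; rewrite hK. Qed.

Lemma in_Aut_avoid (g h : nat -> nat) : cancel g h -> cancel h g ->
  (forall G, Q (avoid G) <-> Q (avoid (List.map (fun z => g \o z) G))) -> in_Aut Q g.
Proof.
move=> gK hK QG; split=> [|X]; first by exists h.
have [F1 [XF1 QF1]] := Q_determined X; have [F2 [YF2 QF2]] := Q_determined (gimg g X).
(* [G] joins a witness for [X] to the pull-back of a witness for [gimg g X]. *)
pose G := F1 ++ List.map (fun z => h \o z) F2.
have XG : outside X G.
  apply/List.Forall_app; split=> //; apply/List.Forall_map.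
  by apply: List.Forall_impl YF2 => z Yz Xhz; apply: Yz; exists (h \o z) => // i /=; rewrite hK.
have gGE : List.map (fun z => g \o z) G = List.map (fun z => g \o z) F1 ++ F2.
  by rewrite List.map_app List.map_map (List.map_ext _ _ (fun z => comp_can z hK)) List.map_id.
have YgG : outside (gimg g X) (List.map (fun z => g \o z) G).
  rewrite gGE; apply/List.Forall_app; split=> //; apply/List.Forall_map.
  apply: List.Forall_impl XF1 => z Xz [x Xx gzx]; apply: Xz.
  suff -> : z = x by [].
  by apply: functional_extensionality => i; apply: (can_inj gK); exact: gzx.
rewrite (QF1 G (List.incl_appl _ (List.incl_refl F1)) XG) QG.
by rewrite (QF2 _ _ YgG) // gGE; apply: List.incl_appr (List.incl_refl F2).
Qed.

Lemma comp_upd1 (g env : nat -> nat) x v : g \o upd1 env x v = upd1 (g \o env) x (g v).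
Proof. by apply: functional_extensionality => w; rewrite /upd1 /=; case: eqP. Qed.

Lemma comp_upd (g env : nat -> nat) vs (t : tup d) :
  g \o upd env vs t = upd (g \o env) vs (g \o t).
Proof. by apply: functional_extensionality => w; rewrite /upd /=; case: pickP. Qed.

Lemma sat_Aut (g h : nat -> nat) : cancel g h -> cancel h g -> in_Aut Q g ->
  forall phi env, sat Q env phi <-> sat Q (g \o env) phi.
Proof.
move=> gK hK [_ QgX]; elim=> [x y|p IH|f IH|f IH|x p IH|vs p IH] env /=.
- by split=> [->|/(can_inj gK)].
- by rewrite IH.
- by split=> sat_f k; [rewrite -IH | rewrite IH].
- by split=> -[k sat_f]; exists k; [rewrite -IH | rewrite IH].
- split=> -[v sat_p].
    by exists (g v); rewrite -comp_upd1 -IH.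
  by exists (h v); rewrite IH comp_upd1 hK.
- rewrite QgX; apply: Q_ext => t; split.
    move=> [x [vsx sat_x] tx]; have -> : t = g \o x by apply: functional_extensionality.
    by split=> [i j /vsx /= -> //|]; rewrite -comp_upd -IH.
  move=> [vst sat_t]; exists (h \o t) => [|i]; last by rewrite /= hK.
  by split=> [i j /vst /= -> //|]; rewrite IH comp_upd comp_can.
Qed.

Definition TrueF : formula d := FEq d 0 0.

Definition FAndI (f : 'I_d -> formula d) : formula d :=
  FAnd (fun k => oapp f TrueF (insub k)).

Definition FAndL (l : list (formula d)) : formula d :=
  FAnd (fun k => odflt TrueF (List.nth_error l k)).

Lemma sat_FAndI env f : sat Q env (FAndI f) <-> forall i, sat Q env (f i).
Proof.
split=> [sat_f i|sat_f k]; first by have := sat_f i; rewrite /= valK.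
by rewrite /=; case: insubP => [i _ _|_]; first exact: sat_f.
Qed.

Lemma sat_FAndL env l : sat Q env (FAndL l) <-> forall phi, List.In phi l -> sat Q env phi.
Proof.
split=> [sat_l phi /(List.In_nth_error l phi)[k lk]|sat_l k].
  by have := sat_l k; rewrite /= lk.
rewrite /=; case lk: (List.nth_error l k) => [phi|//].
exact/sat_l/(List.nth_error_In l k).
Qed.

Lemma upd_shift_hi env N (t : tup d) (i : 'I_d) :
  upd env (fun i : 'I_d => N + i) t (N + i) = t i.
Proof.
rewrite /upd; case: pickP => [j /eqP /addnI /val_inj -> //|/(_ i)].
by rewrite eqxx.
Qed.

Lemma upd_shift_lo env N (t : tup d) v :
  v < N -> upd env (fun i : 'I_d => N + i) t v = env v.
Proof.
move=> lt_v; rewrite /upd; case: pickP => // j /eqP eq_v.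
by move: lt_v; rewrite -eq_v ltnNge leq_addr.
Qed.

(* [Q t, /\_(w in W) t <> (x_(w i))_i], the tuple variable [t] being [x_N, ..., x_(N+d-1)]. *)
Definition avoid_formula N (W : list ('I_d -> nat)) : formula d :=
  FQ (fun i => N + i)
     (FAndL (List.map (fun w => FNot (FAndI (fun i => FEq d (N + i) (w i)))) W)).

Lemma sat_avoid_formula env N W : (forall w i, List.In w W -> w i < N) ->
  sat Q env (avoid_formula N W) <-> Q (avoid (List.map (fun w => env \o w) W)).
Proof.
move=> W_lt; apply: Q_ext => t; split.
  move=> [_ /sat_FAndL sat_W] /List.in_map_iff[w [tw Ww]].
  apply: (sat_W _ (List.in_map _ _ _ Ww)); apply/sat_FAndI => i /=.
  by rewrite upd_shift_hi upd_shift_lo ?W_lt // -tw.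
move=> tW; split=> [i j /addnI /val_inj -> //|]; apply/sat_FAndL => phi.
move=> /List.in_map_iff[w [<- Ww]] /sat_FAndI tw; apply: tW.
apply/List.in_map_iff; exists w; split=> //; apply: functional_extensionality => i.
by have := tw i; rewrite /= upd_shift_hi upd_shift_lo ?W_lt.
Qed.

Lemma tuples_bounded (W : list ('I_d -> nat)) : exists N, forall w i, List.In w W -> w i < N.
Proof.
elim: W => [|w W [N W_lt]]; first by exists 0.
exists (maxn N (\max_(i < d) w i).+1) => w' i [<-|Ww'].
  by rewrite leq_max ltnS leq_bigmax orbT.
by rewrite leq_max W_lt.
Qed.

Definition free_below M (phi : formula d) := forall e e' : nat -> nat,
  (forall v, v < M -> e v = e' v) -> (sat Q e phi <-> sat Q e' phi).

Definition sat_equiv M (e1 e2 : nat -> nat) :=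
  forall phi, free_below M phi -> (sat Q e1 phi <-> sat Q e2 phi).

Lemma free_below_mono M M' phi : M <= M' -> free_below M phi -> free_below M' phi.
Proof. by move=> le_M phiM e e' ee'; apply: phiM => v /leq_trans/(_ le_M)/ee'. Qed.

Lemma free_below_eq M v w : v < M -> w < M -> free_below M (FEq d v w).
Proof. by move=> lt_v lt_w e e' ee' /=; rewrite !ee'. Qed.

Lemma free_below_avoid_formula N W :
  (forall w i, List.In w W -> w i < N) -> free_below N (avoid_formula N W).
Proof.
move=> W_lt e e' ee'; rewrite !sat_avoid_formula //.
suff -> : List.map (fun w => e \o w) W = List.map (fun w => e' \o w) W by [].
apply: List.map_ext_in => w Ww; apply: functional_extensionality => i.
exact/ee'/W_lt.
Qed.

(* One direction suffices as formulas are closed under negation. *)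
Lemma sat_equiv_nosep M e1 e2 :
  ~ (exists phi, free_below M phi /\ sat Q e1 phi /\ ~ sat Q e2 phi) -> sat_equiv M e1 e2.
Proof.
move=> no_sep phi phiM; split=> [sat1|sat2]; apply: NNPP => nsat.
  by apply: no_sep; exists phi.
apply: no_sep; exists (FNot phi); split=> [e e' ee'|] /=; first by rewrite (phiM e e').
by split=> // /(_ sat2).
Qed.

Lemma upd1_agree M (e e' : nat -> nat) x :
  (forall v, v < M -> e v = e' v) -> forall v, v < M.+1 -> upd1 e M x v = upd1 e' M x v.
Proof.
move=> ee' v; rewrite ltnS leq_eqVlt /upd1 => /orP[/eqP->|lt_v]; first by rewrite eqxx.
by rewrite ltn_eqF ?ee'.
Qed.

(* If no [y] works, the countable conjunction of the formulas refuting each [y] is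
   [exists x_M, /\_y psi_y], true at [e1] and false at [e2]. *)
Lemma sat_equiv_forth M e1 e2 : sat_equiv M e1 e2 ->
  forall x, exists y, sat_equiv M.+1 (upd1 e1 M x) (upd1 e2 M y).
Proof.
move=> e12 x; apply: NNPP => no_y.
have refute y : exists psi, free_below M.+1 psi /\
    sat Q (upd1 e1 M x) psi /\ ~ sat Q (upd1 e2 M y) psi.
  by apply: NNPP => no_psi; apply: no_y; exists y; apply: sat_equiv_nosep.
have [psi psiP] := choice _ refute.
have phiM : free_below M (FEx M (FAnd psi)).
  move=> e e' ee' /=; split=> -[v sat_v]; exists v => k.
    by rewrite -((psiP k).1 _ _ (upd1_agree v ee')).
  by rewrite ((psiP k).1 _ _ (upd1_agree v ee')).
have /(e12 _ phiM) /= [y sat_y] : sat Q e1 (FEx M (FAnd psi)).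
  by exists x => /= k; have [_ []] := psiP k.
by case: (psiP y) => _ [_]; apply.
Qed.

Lemma sat_equiv_sym M e1 e2 : sat_equiv M e1 e2 -> sat_equiv M e2 e1.
Proof. by move=> e12 phi phiM; rewrite e12. Qed.

Lemma sat_equiv_back M e1 e2 : sat_equiv M e1 e2 ->
  forall y, exists x, sat_equiv M.+1 (upd1 e1 M x) (upd1 e2 M y).
Proof.
move=> /sat_equiv_sym e21 y; have [x e21x] := sat_equiv_forth e21 y.
by exists x; apply: sat_equiv_sym.
Qed.

Lemma sat_equiv_local M e1 e2 e1' e2' :
  (forall v, v < M -> e1 v = e1' v /\ e2 v = e2' v) ->
  sat_equiv M e1 e2 -> sat_equiv M e1' e2'.
Proof.
move=> ee' e12 phi phiM.
have [ee1 ee2] : (forall v, v < M -> e1 v = e1' v) /\ (forall v, v < M -> e2 v = e2' v).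
  by split=> v /ee'[].
by rewrite -(phiM _ _ ee1) -(phiM _ _ ee2) e12.
Qed.

Lemma equiv_avoid E1 E2 W :
  (forall M phi, free_below M phi -> (sat Q E1 phi <-> sat Q E2 phi)) ->
  Q (avoid (List.map (fun w => E1 \o w) W)) <-> Q (avoid (List.map (fun w => E2 \o w) W)).
Proof.
move=> E12; have [N W_lt] := tuples_bounded W.
rewrite -(sat_avoid_formula E1 W_lt) -(sat_avoid_formula E2 W_lt).
exact: E12 _ _ (free_below_avoid_formula W_lt).
Qed.

Lemma sat_equiv_Aut M0 e1 e2 : sat_equiv M0 e1 e2 ->
  exists g, in_Aut Q g /\ forall v, v < M0 -> e2 v = g (e1 v).
Proof.
move=> e12; have [E1 [E2 [E_init E_equiv E1_even E2_odd]]] :=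
  back_and_forth sat_equiv_forth sat_equiv_back sat_equiv_local e12.
have E12 M phi : free_below M phi -> (sat Q E1 phi <-> sat Q E2 phi).
  by move=> /(free_below_mono (leq_addl M0 M)); apply: E_equiv.
have E_eq v w : E1 v = E1 w <-> E2 v = E2 w.
  have [lt_v lt_w] : v < (maxn v w).+1 /\ w < (maxn v w).+1 by rewrite !ltnS leq_maxl leq_maxr.
  exact: E12 _ _ (free_below_eq lt_v lt_w).
pose g x := E2 (M0 + x.*2); pose h y := E1 (M0 + (y.*2).+1).
have gE v : g (E1 v) = E2 v by apply/E_eq; rewrite E1_even.
have gK : cancel g h by move=> x; rewrite /h -[RHS]E1_even; apply/E_eq; rewrite E2_odd.
have hK : cancel h g by move=> y; rewrite /h gE E2_odd.
exists g; split; last by move=> v /E_init[<- <-]; rewrite gE.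
apply: (in_Aut_avoid gK hK) => G.
have := equiv_avoid (List.map (fun z i => M0 + (z i).*2) G) E12.
rewrite !List.map_map (@List.map_ext _ _ _ id) ?List.map_id // => z.
by apply: functional_extensionality => i /=; rewrite E1_even.
Qed.

Section Orbit.
Variables (n : nat) (a : 'I_n -> tup d).

Let m := #|{: 'I_n * 'I_d}|.

Definition orbit_var (i : 'I_n) (j : 'I_d) : nat := enum_rank (i, j).

Lemma orbit_var_inj : injective (fun p : 'I_n * 'I_d => orbit_var p.1 p.2).
Proof. by move=> [i j] [i' j'] /val_inj /enum_rank_inj. Qed.

Lemma orbit_var_lt i j : orbit_var i j < m.
Proof. exact: ltn_ord. Qed.

Lemma orbit_var_onto v : v < m -> exists i j, v = orbit_var i j.
Proof.
move=> lt_v; exists (enum_val (Ordinal lt_v)).1, (enum_val (Ordinal lt_v)).2.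
by rewrite /orbit_var -surjective_pairing enum_valK.
Qed.

Let env_a v := if insub v : option 'I_m is Some k then a (enum_val k).1 (enum_val k).2 else 0.

Let env_aE i j : env_a (orbit_var i j) = a i j.
Proof. by rewrite /env_a /orbit_var valK enum_rankK. Qed.

Local Notation values e := (fun i j => e (orbit_var i j)).
Local Notation orbit := (Aut_orbit Q a).

Lemma orbit_separation e : ~ orbit (values e) ->
  exists phi, free_below m phi /\ sat Q env_a phi /\ ~ sat Q e phi.
Proof.
move=> not_orbit; apply: NNPP => no_sep; apply: not_orbit.
have [g [Aut_g ge]] := sat_equiv_Aut (sat_equiv_nosep no_sep).
by exists g; split=> // i j; rewrite ge ?orbit_var_lt // env_aE.
Qed.

Definition orbit_conjunct_spec (e : nat -> nat) (phi : formula d) :=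
  free_below m phi /\ sat Q env_a phi /\ (~ orbit (values e) -> ~ sat Q e phi).

Definition orbit_conjunct e := epsilon (inhabits TrueF) (orbit_conjunct_spec e).

Lemma orbit_conjunctP e : orbit_conjunct_spec e (orbit_conjunct e).
Proof.
apply: epsilon_spec; have [orbit_e|/orbit_separation[phi sep]] := classic (orbit (values e)).
  by exists TrueF; split=> [e1 e2 _ //|].
by exists phi; case: sep => phiM [sat_a nsat_e].
Qed.

(* An assignment is determined below [m] by the finite sequence of its first [m] values,
   so countably many conjuncts suffice. *)
Definition orbit_formula : formula d :=
  FAnd (fun k => orbit_conjunct (nth 0 (odflt [::] (unpickle k)))).

Lemma sat_orbit_formula env : sat Q env orbit_formula <-> orbit (values env).
Proof.
split=> [sat_env|[g [Aut_g ga]] k].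
  apply: NNPP => not_orbit; pose s := mkseq env m.
  have agree v : v < m -> nth 0 s v = env v by move=> lt_v; rewrite nth_mkseq.
  have sat_s : sat Q env (orbit_conjunct (nth 0 s)).
    by have := sat_env (pickle s); rewrite pickleK.
  have [phiM [_ sep]] := orbit_conjunctP (nth 0 s).
  move: sat_s; rewrite -(phiM _ _ agree); apply: sep.
  suff -> : values (nth 0 s) = values env by [].
  by do 2!apply: functional_extensionality => ?; rewrite agree ?orbit_var_lt.
have [h gK hK] := Aut_g.1.
have [phiM [sat_a _]] := orbit_conjunctP (nth 0 (odflt [::] (unpickle k))).
apply/(phiM (g \o env_a)); last exact: (sat_Aut gK hK Aut_g _ _).1 sat_a.
by move=> v /orbit_var_onto[i [j ->]]; rewrite /= env_aE ga.
Qed.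

End Orbit.

End Definability.

Theorem proposition22 (d : nat) (C : bcomb d) (n : nat) (a : 'I_n -> tup d) :
  definable (bsem C) (Aut_orbit (bsem C) a).
Proof.
exists (orbit_formula (bsem C) a), (@orbit_var d n); split; first exact: orbit_var_inj.
exact/sat_orbit_formula/bsem_determined.
Qed.
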